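(* Let $G$ be a finite group such that $|Z(G)|$ has at least two distinct prime divisors. Then the difference graph $\mathcal{D}(G)$ is bipartite if and only if $G\cong\mathbb{Z}_{p^{\alpha}q}$, where $p,q$ are distinct primes and $\alpha\ge 1$.
   Context: For a finite group $G$ with identity $e$: the intersection power graph $\mathcal{G}_I(G)$ has vertex set $G$, two distinct non-identity vertices $x,y$ being adjacent iff $\langle x\rangle\cap\langle y\rangle\neq\{e\}$, and $e$ being adjacent to every other vertex. The power graph $\mathcal{P}(G)$ has vertex set $G$, two distinct vertices being adjacent iff one is a power of the other. The difference graph $\mathcal{D}(G)$ is the graph on vertex set $G$ with edge set $E(\mathcal{G}_I(G))\setminus E(\mathcal{P}(G))$, with all isolated vertices removed. $Z(G)$ denotes the center of $G$. *)

From mathcomp Require Import all_boot all_fingroup all_algebra all_solvable.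
Set Implicit Arguments. Unset Strict Implicit. Unset Printing Implicit Defensive.
Local Open Scope group_scope.

Section Graphs.
Variable gT : finGroupType.
Variable G : {group gT}.

Definition ipg_adj (x y : gT) : bool :=
  [&& x \in G, y \in G, x != y &
      [|| x == 1, y == 1 | <[x]> :&: <[y]> != 1]].

Definition pg_adj (x y : gT) : bool :=
  [&& x \in G, y \in G, x != y & (x \in <[y]>) || (y \in <[x]>)].

Definition diff_adj (x y : gT) : bool := ipg_adj x y && ~~ pg_adj x y.

Definition diff_vertices : {set gT} :=
  [set x in G | [exists y, diff_adj x y]].

Definition diff_bipartite : Prop :=
  exists A : {set gT}, A \subset diff_vertices /\
    forall x y, diff_adj x y -> (x \in A) != (y \in A).
End Graphs.

(* Inside a cyclic subgroup <[g]>, two elements are adjacent in D(G) exactly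
   when their orders share a prime and neither divides the other.  Hence a
   bipartite D(G) has no element whose order is divisible by three distinct
   primes (triangle on the orders pq, qr, rp) or by p^2 q^2 (5-cycle on the
   orders p^2, pq, q^2, p^2 q, p q^2).
   Now let c_p, c_q be central of prime orders p <> q.  Multiplying two
   incomparable p-elements by c_q makes them adjacent; a triangle then forces
   c_p into every nontrivial p-cycle, and a second triangle (through c_p c_q)
   makes the p-elements totally ordered by cyclic inclusion.  So all p-elements
   lie in one <[g_p]>, likewise for q, g_p and g_q commute, and as |G| has no
   third prime, G = <[g_p g_q]> has order p^a q^b with min(a, b) = 1.
   Conversely, in Z_(p^a q) colouring a vertex by whether q divides its order
   is a bipartition: divisors of p^a q with the same q-part are comparable. *)

From mathcomp Require Import all_boot all_fingroup all_algebra all_solvable.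
Set Implicit Arguments. Unset Strict Implicit. Unset Printing Implicit Defensive.

Lemma dvdn_pexpM_qexp p q i j k l : prime p -> prime q -> p != q ->
  (p ^ i * q ^ j %| p ^ k * q ^ l) = (i <= k) && (j <= l).
Proof.
move=> pp qp pq.
have pq_gt0 m n : 0 < p ^ m * q ^ n by rewrite muln_gt0 !expn_gt0 !prime_gt0.
have logn_pq r m n : prime r -> logn r (p ^ m * q ^ n) = m * (r == p) + n * (r == q).
  by move=> rp; rewrite lognM ?expn_gt0 ?prime_gt0 // !lognX !logn_prime.
have cop : coprime (p ^ i) (q ^ j).
  by rewrite coprimeXl // coprimeXr // prime_coprime // dvdn_prime2.
rewrite Gauss_dvd // !pfactor_dvdn // !logn_pq // !eqxx [q == p]eq_sym (negPf pq).
by rewrite !muln1 !muln0 addn0.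
Qed.

Lemma dvdn_pexpM_prime_cases p q a d : prime p -> prime q -> p != q ->
  d %| p ^ a * q -> exists i, (d = p ^ i \/ d = p ^ i * q)%N.
Proof.
move=> pp qp pq; have [qd | qNd] := boolP (q %| d).
  rewrite -(divnK qd) dvdn_pmul2r ?prime_gt0 // => /(@dvdn_pfactor p _ _ pp)[i _ ->].
  by exists i; right.
have cop : coprime d q by rewrite coprime_sym prime_coprime.
rewrite Gauss_dvdl // => /(@dvdn_pfactor p _ _ pp)[i _ ->].
by exists i; left.
Qed.

Lemma dvdn_pexpM_prime_total p q a d e : prime p -> prime q -> p != q ->
  d %| p ^ a * q -> e %| p ^ a * q -> (q %| d) = (q %| e) -> (d %| e) || (e %| d).
Proof.
move=> pp qp pq; have cases := dvdn_pexpM_prime_cases pp qp pq.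
move=> /cases[i [->|->]] /cases[j [->|->]].
- by rewrite !dvdn_Pexp2l ?prime_gt1 // leq_total.
- by rewrite dvdn_mull // Euclid_dvdX // dvdn_prime2 // eq_sym (negPf pq).
- by rewrite dvdn_mull // Euclid_dvdX // dvdn_prime2 // eq_sym (negPf pq).
by rewrite !dvdn_pmul2r ?prime_gt0 // !dvdn_Pexp2l ?prime_gt1 // leq_total.
Qed.

Lemma two_prime_divisors n : 1 < size (primes n) ->
  exists p q, [/\ prime p, prime q, p != q, p %| n & q %| n].
Proof.
have mem_pr r : r \in primes n -> prime r /\ r %| n by rewrite mem_primes => /and3P[].
move: mem_pr (primes_uniq n); case: (primes n) => [|p [|q s]] //= mem_pr.
rewrite inE negb_or => /andP[/andP[pq _] _] _.
have [pp pn] := mem_pr p (mem_head _ _).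
have [qp qn] : prime q /\ q %| n by apply: mem_pr; rewrite !inE eqxx orbT.
by exists p, q.
Qed.

Local Open Scope group_scope.

Section TwoColouring.
Variables (T : Type) (e : rel T) (colour : T -> bool).
Hypothesis colour_edge : forall x y, e x y -> colour x != colour y.

Lemma path_colour x p : path e x p -> colour (last x p) = colour x (+) odd (size p).
Proof.
elim: p x => [|y p IHp] x /=; first by rewrite addbF.
case/andP=> /colour_edge xy /IHp->.
by move: xy; case: (colour x); case: (colour y); case: odd.
Qed.

Lemma cycle_colour_even s : path.cycle e s -> ~~ odd (size s).
Proof.
case: s => [|x p] //= /path_colour; rewrite last_rcons size_rcons /=.
by case: (colour x); case: odd.
Qed.

End TwoColouring.

Lemma orderXdivK (gT : finGroupType) (a : gT) d : d %| #[a] -> #[a ^+ (#[a] %/ d)] = d.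
Proof. by move=> da; rewrite orderXdiv ?dvdn_div // divnA // mulKn. Qed.

Lemma p_elt_dvd_order (gT : finGroupType) p (x : gT) :
  prime p -> p.-elt x -> x != 1 -> p %| #[x].
Proof.
by move=> pp px; apply: contraR => p'x; rewrite -order_eq1 (pnat_1 px) // p'natE.
Qed.

Lemma mem_cycle_order (gT : finGroupType) (g x y : gT) :
  x \in <[g]> -> y \in <[g]> -> (x \in <[y]>) = (#[x] %| #[y]).
Proof. by move=> xg yg; rewrite -cycle_subG (cardSg_cyclic (cycle_cyclic g)) ?cycle_subG. Qed.

Lemma commute_center (gT : finGroupType) (G : {group gT}) z x :
  z \in 'Z(G) -> x \in G -> commute z x.
Proof. by case/centerP=> _ cGz /cGz. Qed.

Lemma mem_cycle_constt (gT : finGroupType) pi (u v : gT) :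
  u \in <[v]> -> u.`_pi \in <[v.`_pi]>.
Proof. by case/cycleP=> k ->; rewrite consttX mem_cycle. Qed.

Lemma constt_mul_p'elt (gT : finGroupType) pi (u c : gT) :
  commute u c -> pi.-elt u -> pi^'.-elt c -> (u * c).`_pi = u.
Proof. by move=> cuc piu pi'c; rewrite consttM // (constt_p_elt piu) (constt1P pi'c) mulg1. Qed.

Lemma Zp_cyclic n : cyclic (Zp n).
Proof. by rewrite /Zp; case: ifP => _; [rewrite Zp_cycle cycle_cyclic | apply: cyclic1]. Qed.

Section DifferenceGraph.
Variables (gT : finGroupType) (G : {group gT}).
Implicit Types x y w : gT.

Lemma diff_adjE x y : diff_adj G x y =
  [&& x \in G, y \in G, <[x]> :&: <[y]> != 1, x \notin <[y]> & y \notin <[x]>].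
Proof.
rewrite /diff_adj /ipg_adj /pg_adj.
case: (x \in G) (y \in G) => [] [] //=.
have [-> | _] := eqVneq x y; first by rewrite cycle_id !andbF.
have [-> | nx1] := eqVneq x 1; first by rewrite group1 !andbF.
have [-> | ny1] := eqVneq y 1; first by rewrite group1 orbT !andbF.
by rewrite negb_or.
Qed.

Lemma diff_adj_sym x y : diff_adj G x y = diff_adj G y x.
Proof. by rewrite !diff_adjE setIC andbCA; do 3 congr andb; apply: andbC. Qed.

Lemma diff_adj_common_elt x y w : x \in G -> y \in G -> w != 1 ->
  w \in <[x]> -> w \in <[y]> -> x \notin <[y]> -> y \notin <[x]> -> diff_adj G x y.
Proof.
move=> xG yG ntw wx wy xNy yNx; rewrite diff_adjE xG yG xNy yNx !andbT.
by apply/trivgPn; exists w; rewrite // inE wx.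
Qed.

Lemma diff_bipartite_no_odd_cycle s :
  diff_bipartite G -> odd (size s) -> ~~ path.cycle (diff_adj G) s.
Proof.
case=> A [_ colourA] odd_s; apply: contraL odd_s.
exact: (@cycle_colour_even _ _ (fun x => x \in A)).
Qed.

Lemma diff_adj_mul_central pi u v c : u \in G -> v \in G -> pi.-elt u -> pi.-elt v ->
  u \notin <[v]> -> v \notin <[u]> -> c \in 'Z(G) -> c != 1 -> pi^'.-elt c ->
  diff_adj G (u * c) (v * c).
Proof.
move=> uG vG piu piv uNv vNu cZ ntc pi'c.
have cG : c \in G by apply: subsetP cZ; apply: center_sub.
have c_comm z : z \in G -> commute z c.
  by move=> zG; exact: commute_sym (commute_center cZ zG).
have c_mem z : z \in G -> pi.-elt z -> c \in <[z * c]>.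
  move=> zG piz; rewrite -(commute_center cZ zG).
  by rewrite -{1}(constt_mul_p'elt (commute_center cZ zG) pi'c) ?p_eltNK ?cycle_constt.
have notin_mul_c z w : z \in G -> w \in G -> pi.-elt z -> pi.-elt w ->
    z \notin <[w]> -> z * c \notin <[w * c]>.
  move=> zG wG piz piw zNw; apply/negP => /(mem_cycle_constt pi).
  by rewrite (constt_mul_p'elt (c_comm z zG)) ?(constt_mul_p'elt (c_comm w wG)) //; apply/negP.
apply: (diff_adj_common_elt (groupM uG cG) (groupM vG cG) ntc (c_mem u uG piu)).
- exact: c_mem.
- exact: notin_mul_c.
exact: notin_mul_c.
Qed.

End DifferenceGraph.

Section CyclicSubgroup.
Variables (gT : finGroupType) (G : {group gT}) (g : gT).
Hypothesis gG : g \in G.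
Local Open Scope nat_scope.

Lemma diff_adj_cycle x y r : x \in <[g]> -> y \in <[g]> -> prime r ->
  r %| #[x] -> r %| #[y] -> ~~ (#[x] %| #[y]) -> ~~ (#[y] %| #[x]) -> diff_adj G x y.
Proof.
move=> xg yg pr rx ry xNy yNx.
have gGsub : <[g]> \subset G by rewrite cycle_subG.
have [w wx ow] := Cauchy (G := <[x]>%G) pr rx.
have wg : w \in <[g]> by apply: subsetP wx; rewrite cycle_subG.
apply: (diff_adj_common_elt (subsetP gGsub x xg) (subsetP gGsub y yg) _ wx).
- by rewrite -order_gt1 ow prime_gt1.
- by rewrite (mem_cycle_order wg yg) ow.
- by rewrite (mem_cycle_order xg yg).
by rewrite (mem_cycle_order yg xg).
Qed.

Lemma diff_adj_cycle_divisors d e r : d %| #[g] -> e %| #[g] -> prime r ->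
  r %| d -> r %| e -> ~~ (d %| e) -> ~~ (e %| d) ->
  diff_adj G (g ^+ (#[g] %/ d)) (g ^+ (#[g] %/ e)).
Proof.
move=> dg eg pr rd re dNe eNd.
by apply: (diff_adj_cycle (r := r)); rewrite ?mem_cycle ?orderXdivK.
Qed.

Hypothesis bip : diff_bipartite G.

Lemma diff_bipartite_three_primes p q r : prime p -> prime q -> prime r ->
  p != q -> q != r -> r != p -> ~~ (p * q * r %| #[g]).
Proof.
move=> p_pr q_pr r_pr p_neq_q q_neq_r r_neq_p; apply/negP => pqr_g.
pose elt d := g ^+ (#[g] %/ d).
have edge a b c : prime a -> prime b -> prime c -> a != c ->
    a * b %| #[g] -> b * c %| #[g] -> diff_adj G (elt (a * b)) (elt (b * c)).
  move=> pa pb pc ac abg bcg.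
  apply: (diff_adj_cycle_divisors (r := b)) => //.
  - exact: dvdn_mull.
  - exact: dvdn_mulr.
  - by rewrite [(a * b)]mulnC dvdn_pmul2l ?prime_gt0 // dvdn_prime2.
  by rewrite [(a * b)]mulnC dvdn_pmul2l ?prime_gt0 // dvdn_prime2 // eq_sym.
have pq_g : p * q %| #[g] by apply: dvdn_trans pqr_g; apply: dvdn_mulr.
have qr_g : q * r %| #[g] by apply: dvdn_trans pqr_g; rewrite -mulnA dvdn_mull.
have rp_g : r * p %| #[g].
  by apply: dvdn_trans pqr_g; rewrite [(p * q * r)]mulnC mulnA dvdn_mulr.
apply: (negP (diff_bipartite_no_odd_cycle bip
  (s := [:: elt (p * q); elt (q * r); elt (r * p)]) isT)).
by rewrite /= (edge p q r) ?(edge q r p) ?(edge r p q) // eq_sym.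
Qed.

Lemma diff_bipartite_two_prime_squares p q : prime p -> prime q -> p != q ->
  ~~ (p ^ 2 * q ^ 2 %| #[g]).
Proof.
move=> pp qp pq; apply/negP => sq_g.
pose elt i j := g ^+ (#[g] %/ (p ^ i * q ^ j)).
have edge i j k l : i <= 2 -> j <= 2 -> k <= 2 -> l <= 2 ->
    (0 < minn i k) || (0 < minn j l) ->
    ~~ ((i <= k) && (j <= l)) -> ~~ ((k <= i) && (l <= j)) ->
  diff_adj G (elt i j) (elt k l).
  move=> i2 j2 k2 l2 common ik ki.
  have dvd_g a b : a <= 2 -> b <= 2 -> p ^ a * q ^ b %| #[g].
    by move=> a2 b2; apply: dvdn_trans sq_g; rewrite dvdn_pexpM_qexp ?a2.
  have [r [pr ri rk]] : exists r, [/\ prime r, r %| p ^ i * q ^ j & r %| p ^ k * q ^ l].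
    case/orP: common; rewrite leq_min => /andP[m_gt0 n_gt0]; [exists p | exists q].
      by split; rewrite // dvdn_mulr // dvdn_exp.
    by split; rewrite // dvdn_mull // dvdn_exp.
  by apply: (diff_adj_cycle_divisors (r := r)); rewrite ?dvd_g ?dvdn_pexpM_qexp.
apply: (negP (diff_bipartite_no_odd_cycle bip
  (s := [:: elt 2 0; elt 1 1; elt 0 2; elt 2 1; elt 1 2]) isT)).
by rewrite /= !edge.
Qed.

End CyclicSubgroup.

Section CentralPrimePair.
Variables (gT : finGroupType) (G : {group gT}) (s t : nat) (cs ct : gT).
Hypotheses (bip : diff_bipartite G) (s_pr : prime s) (t_pr : prime t) (s_neq_t : s != t).
Hypotheses (cs_Z : cs \in 'Z(G)) (ct_Z : ct \in 'Z(G)) (o_cs : #[cs] = s) (o_ct : #[ct] = t).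

Let cs_G : cs \in G. Proof. by apply: subsetP cs_Z; apply: center_sub. Qed.
Let ct_G : ct \in G. Proof. by apply: subsetP ct_Z; apply: center_sub. Qed.
Let cs_s : s.-elt cs. Proof. by rewrite /p_elt o_cs pnat_id. Qed.
Let ct_t : t.-elt ct. Proof. by rewrite /p_elt o_ct pnat_id. Qed.
Let ntcs : cs != 1. Proof. by rewrite -order_gt1 o_cs prime_gt1. Qed.
Let ntct : ct != 1. Proof. by rewrite -order_gt1 o_ct prime_gt1. Qed.
Let s_elt_t' (x : gT) : s.-elt x -> t^'.-elt x.
Proof. by move/pi_p'nat; apply; rewrite !inE eq_sym. Qed.
Let ct_s' : s^'.-elt ct. Proof. by move: ct_t => /pi_p'nat; apply; rewrite !inE. Qed.

Lemma central_prime_mem_cycle x : x \in G -> s.-elt x -> x != 1 -> cs \in <[x]>.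
Proof.
move=> xG sx ntx; apply/idPn => csNx.
have not_both w : x \in <[w]> -> cs \in <[w]> -> False.
  move=> xw csw; case/negP: csNx.
  by rewrite (mem_cycle_order csw xw) o_cs p_elt_dvd_order.
have cx : commute x cs := commute_sym (commute_center cs_Z xG).
pose y := x * cs.
have yG : y \in G by rewrite groupM.
have sy : s.-elt y by rewrite p_eltM.
have x_mem w : y \in <[w]> -> cs \in <[w]> -> x \in <[w]>.
  by move=> yw csw; rewrite -(mulgK cs x) groupM ?groupV.
have cs_mem w : y \in <[w]> -> x \in <[w]> -> cs \in <[w]>.
  by move=> yw xw; rewrite -(mulKg x cs) groupM ?groupV.
have xNcs : x \notin <[cs]> by apply/negP => xcs; apply: not_both xcs (cycle_id cs).
have csNy : cs \notin <[y]>.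
  by apply/negP => csy; apply: not_both (x_mem y (cycle_id y) csy) csy.
have yNcs : y \notin <[cs]>.
  by apply/negP => ycs; apply: not_both (x_mem cs ycs (cycle_id cs)) (cycle_id cs).
have yNx : y \notin <[x]>.
  by apply/negP => yx; case/negP: csNx; apply: cs_mem yx (cycle_id x).
have xNy : x \notin <[y]>.
  by apply/negP => xy; apply: not_both xy (cs_mem y (cycle_id y) xy).
apply: (negP (diff_bipartite_no_odd_cycle bip (s := [:: x * ct; cs * ct; y * ct]) isT)).
by rewrite /= !(diff_adj_mul_central (pi := s)).
Qed.

Lemma p_elt_cycle_total x y : x \in G -> y \in G -> s.-elt x -> s.-elt y ->
  (x \in <[y]>) || (y \in <[x]>).
Proof.
move=> xG yG sx sy; apply/idPn => /norP[xNy yNx].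
have ntx : x != 1 by apply: contraNneq xNy => ->; apply: group1.
have nty : y != 1 by apply: contraNneq yNx => ->; apply: group1.
have csx := central_prime_mem_cycle xG sx ntx.
have csy := central_prime_mem_cycle yG sy nty.
have cs_ct : commute cs ct := commute_center cs_Z ct_G.
pose c := cs * ct.
have cG : c \in G by rewrite groupM.
have c_s : c.`_s = cs by rewrite constt_mul_p'elt.
have c_t : c.`_t = ct.
  by rewrite /c cs_ct constt_mul_p'elt //; apply: s_elt_t'.
have cs_c : cs \in <[c]> by rewrite -c_s cycle_constt.
have c_notin z : s.-elt z -> c \notin <[z]>.
  move=> sz; apply/negP => /(mem_cycle_constt t).
  by rewrite c_t (constt1P (s_elt_t' sz)) cycle1 inE (negPf ntct).
have notin_c z w : s.-elt z -> cs \in <[w]> -> z \notin <[w]> -> z \notin <[c]>.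
  move=> sz csw zNw; apply/negP => /(mem_cycle_constt s); rewrite c_s (constt_p_elt sz).
  by move=> zcs; case/negP: zNw; apply: subsetP zcs; rewrite cycle_subG.
apply: (negP (diff_bipartite_no_odd_cycle bip (s := [:: x; y; c]) isT)).
rewrite /= !(diff_adj_common_elt (w := cs)) ?c_notin //.
  exact: notin_c sx csy xNy.
exact: notin_c sy csx yNx.
Qed.

Lemma p_elt_max_cycle :
  exists2 g, g \in G /\ s.-elt g & forall x, x \in G -> s.-elt x -> x \in <[g]>.
Proof.
have [|g /andP[gG sg] maxg] := @arg_maxnP _ 1 [pred x | (x \in G) && s.-elt x] (fun x => #[x]).
  by rewrite /= group1 p_elt1.
exists g => // x xG sx; case/orP: (p_elt_cycle_total xG gG sx sg) => // gx.
have /eqP-> : <[g]> == <[x]>.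
  by rewrite eqEcard cycle_subG gx /=; apply: maxg; rewrite /= xG.
exact: cycle_id.
Qed.

End CentralPrimePair.

Section TwoPrimeCycles.
Variables (gT : finGroupType) (G : {group gT}) (p q : nat) (x y : gT).
Hypotheses (p_neq_q : p != q) (xG : x \in G) (yG : y \in G).
Hypotheses (px : p.-elt x) (qy : q.-elt y).
Hypothesis all_p : forall z, z \in G -> p.-elt z -> z \in <[x]>.
Hypothesis all_q : forall z, z \in G -> q.-elt z -> z \in <[y]>.

Let qy' : p^'.-elt y. Proof. by move: qy => /pi_p'nat; apply; rewrite !inE. Qed.

Lemma commute_p_q_cycles : commute x y.
Proof.
have kx : [~ x, y] \in <[x]>.
  by rewrite /commg groupM ?groupV ?cycle_id // all_p ?groupJ // p_eltJ.
have ky : [~ x, y] \in <[y]>.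
  by rewrite commgEr groupM ?cycle_id // all_q ?groupJ ?groupV // p_eltJ p_eltV.
apply/commgP; rewrite -order_eq1; apply/eqP/(pnat_1 (mem_p_elt px kx)).
exact: mem_p_elt qy' ky.
Qed.

Lemma order_p_q_mul : #[x * y] = (#[x] * #[y])%N.
Proof. exact: orderM commute_p_q_cycles (pnat_coprime px qy'). Qed.

Lemma p_q_group_cycleM : (forall r, prime r -> r %| #|G| -> (r == p) || (r == q)) ->
  G :=: <[x * y]>.
Proof.
move=> pq_group; apply/eqP; rewrite eqEsubset cycle_subG groupM // andbT.
apply/subsetP => z zG; have zG' w : w \in <[z]> -> w \in G.
  by apply: subsetP; rewrite cycle_subG.
rewrite (cycleM commute_p_q_cycles (pnat_coprime px qy')) -(consttC p z) mem_mulg //.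
  by rewrite all_p ?zG' ?cycle_constt ?p_elt_constt.
rewrite all_q ?zG' ?cycle_constt //.
apply/(pnatP _ (order_gt0 _)) => r pr r_dvd.
have r_p' : r \in p^'.
  by apply: pnatPpi (p_elt_constt p^' z) _; rewrite mem_primes pr order_gt0.
move: (pq_group r pr (dvdn_trans r_dvd (order_dvdG (zG' _ (cycle_constt _ _))))).
by move: r_p'; rewrite !inE => /negPf->.
Qed.

End TwoPrimeCycles.

Section TwoCentralPrimes.
Variables (gT : finGroupType) (G : {group gT}) (p q : nat) (cp cq : gT).
Hypotheses (bip : diff_bipartite G) (p_pr : prime p) (q_pr : prime q) (p_neq_q : p != q).
Hypotheses (cp_Z : cp \in 'Z(G)) (cq_Z : cq \in 'Z(G)) (o_cp : #[cp] = p) (o_cq : #[cq] = q).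

Let cp_G : cp \in G. Proof. by apply: subsetP cp_Z; apply: center_sub. Qed.
Let cq_G : cq \in G. Proof. by apply: subsetP cq_Z; apply: center_sub. Qed.
Let q_neq_p : q != p. Proof. by rewrite eq_sym. Qed.
Let cp_p : p.-elt cp. Proof. by rewrite /p_elt o_cp pnat_id. Qed.
Let cq_q : q.-elt cq. Proof. by rewrite /p_elt o_cq pnat_id. Qed.

Lemma prime_dvd_card_central r : prime r -> r %| #|G| -> (r == p) || (r == q).
Proof.
move=> r_pr rG; apply/idPn; rewrite negb_or => /andP[r_neq_p r_neq_q].
have [y yG o_y] := Cauchy r_pr rG.
have cpq_Z : cp * cq \in 'Z(G) by rewrite groupM.
have o_cpq : #[cp * cq] = (p * q)%N.
  by rewrite (orderM (commute_center cp_Z cq_G)) o_cp o_cq // prime_coprime ?dvdn_prime2.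
have o_cpqy : #[cp * cq * y] = (p * q * r)%N.
  rewrite (orderM (commute_center cpq_Z yG)) o_cpq o_y // coprimeMl.
  by rewrite !prime_coprime ?dvdn_prime2 // ![_ == r]eq_sym r_neq_p r_neq_q.
have q_neq_r : q != r by rewrite eq_sym.
have := diff_bipartite_three_primes (groupM (groupM cp_G cq_G) yG) bip p_pr q_pr r_pr.
by rewrite o_cpqy dvdnn => /(_ p_neq_q q_neq_r r_neq_p).
Qed.

Lemma diff_bipartite_isog_Zp :
  exists p' q' a, [/\ prime p', prime q', p' != q', 1 <= a & G \isog Zp (p' ^ a * q')].
Proof.
have [gp [gp_G p_gp] all_p] := p_elt_max_cycle bip p_pr q_pr p_neq_q cp_Z cq_Z o_cp o_cq.
have [gq [gq_G q_gq] all_q] := p_elt_max_cycle bip q_pr p_pr q_neq_p cq_Z cp_Z o_cq o_cp.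
have G_eq := p_q_group_cycleM p_neq_q gp_G gq_G p_gp q_gq all_p all_q prime_dvd_card_central.
have [a o_gp] := p_natP p_gp; have [b o_gq] := p_natP q_gq.
have o_g : #[gp * gq] = (p ^ a * q ^ b)%N.
  by rewrite (order_p_q_mul p_neq_q gp_G gq_G p_gp q_gq all_p all_q) o_gp o_gq.
have a_gt0 : 0 < a.
  have: #[cp] %| #[gp] by apply: order_dvdG; apply: all_p.
  by rewrite o_cp o_gp Euclid_dvdX // dvdnn.
have b_gt0 : 0 < b.
  have: #[cq] %| #[gq] by apply: order_dvdG; apply: all_q.
  by rewrite o_cq o_gq Euclid_dvdX // dvdnn.
have a_or_b_le1 : (a <= 1) || (b <= 1).
  have := diff_bipartite_two_prime_squares (groupM gp_G gq_G) bip p_pr q_pr p_neq_q.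
  by rewrite o_g dvdn_pexpM_qexp // negb_and -!ltnNge.
have iso : G \isog Zp (p ^ a * q ^ b) by rewrite G_eq -o_g isog_sym Zp_isog.
case/orP: a_or_b_le1 => [a_le1 | b_le1].
  have a1 : a = 1%N by apply/anti_leq; rewrite a_le1.
  by exists q, p, b; split; rewrite // mulnC -(expn1 p) -a1.
have b1 : b = 1%N by apply/anti_leq; rewrite b_le1.
by exists p, q, a; split; rewrite // -(expn1 q) -b1.
Qed.

End TwoCentralPrimes.

Lemma isog_Zp_diff_bipartite (gT : finGroupType) (G : {group gT}) p q a :
  prime p -> prime q -> p != q -> G \isog Zp (p ^ a * q) -> diff_bipartite G.
Proof.
move=> pp qp pq isoG.
have [g G_eq] : exists g, G :=: <[g]>.
  by apply/cyclicP; rewrite (isog_cyclic isoG) Zp_cyclic.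
have oG : #|G| = (p ^ a * q)%N.
  by rewrite (card_isog isoG) card_Zp // muln_gt0 expn_gt0 !prime_gt0.
have vertex x y : diff_adj G x y -> (x \in G) && [exists z, diff_adj G x z].
  move=> xy; apply/andP; split; last by apply/existsP; exists y.
  by move: xy; rewrite diff_adjE => /andP[].
exists [set x in diff_vertices G | q %| #[x]]; split.
  by apply/subsetP => x; rewrite inE => /andP[].
move=> x y xy; have yx : diff_adj G y x by rewrite diff_adj_sym.
rewrite !inE (vertex _ _ xy) (vertex _ _ yx) /=.
move: xy; rewrite diff_adjE G_eq => /and5P[xg yg _ xNy yNx].
apply/negP => /eqP same_q.
have dvd_card z : z \in <[g]> -> #[z] %| p ^ a * q by rewrite -oG G_eq; apply: order_dvdG.
have := dvdn_pexpM_prime_total pp qp pq (dvd_card x xg) (dvd_card y yg) same_q.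
by rewrite -(mem_cycle_order xg yg) -(mem_cycle_order yg xg) (negPf xNy) (negPf yNx).
Qed.

Theorem theorem7p5 (gT : finGroupType) (G : {group gT}) :
  1 < size (primes #|'Z(G)|) ->
  (diff_bipartite G <->
   exists p q a : nat, [/\ prime p, prime q, p != q, 1 <= a &
      G \isog Zp (p ^ a * q)]).
Proof.
case/two_prime_divisors=> p [q [pp qp pq pZ qZ]].
have [cp cp_Z o_cp] := Cauchy pp pZ.
have [cq cq_Z o_cq] := Cauchy qp qZ.
split=> [bip | [p' [q' [a [pp' qp' pq' _ isoG]]]]].
  exact: diff_bipartite_isog_Zp bip pp qp pq cp_Z cq_Z o_cp o_cq.
exact: isog_Zp_diff_bipartite pp' qp' pq' isoG.
Qed.
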